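(* Let $M$ be a 4-dimensional chart domain with coordinates $(t,r,\theta,\phi)$, let $\Gamma$ be a spherically symmetric torsion-free affine connection on $M$ with coefficients given by functions $k_1,\dots,k_{12}$ of $(t,r)$ as in the context, and let $L=L(t,r,\dot t,\dot r,w)$ be an $SO(3)$-spatially spherically symmetric pseudo-Finsler function. Then the system of equations $\delta_\theta L=0=\delta_\phi L$, where $\delta_a=\partial_a-\Gamma^c{}_{ab}(x)\dot x^b\dot\partial_c$, is equivalent to $\delta_wL:=\left(wk_7\dot\partial_t+wk_{10}\dot\partial_r+(k_8\dot t+k_9\dot r)\partial_w\right)L=0$ together with $k_{11}=k_{12}=0$.
   Context: Induced coordinates $(t,r,\theta,\phi,\dot t,\dot r,\dot\theta,\dot\phi)$ on $TM$. A pseudo-Finsler function is a smooth $L$ on a conic subbundle $\mathcal{A}\subset TM\setminus\{0\}$ (open, projecting onto $M$, stable under positive rescaling of $\dot x$), positively 2-homogeneous in $\dot x$, with $g_{ab}=\tfrac12\dot\partial_a\dot\partial_bL$ non-degenerate. $SO(3)$-spatially spherically symmetric means $L$ depends only on $(t,r,\dot t,\dot r,w)$ with $w^2=\dot\theta^2+\sin^2\theta\,\dot\phi^2$; $\partial_w$ is defined by $w\partial_w=\dot\theta\dot\partial_\theta+\dot\phi\dot\partial_\phi$. The spherically symmetric torsion-free connection: the nonzero coefficients (symmetric in the lower indices) are $\Gamma^t_{tt}=k_1$, $\Gamma^t_{tr}=k_2$, $\Gamma^t_{rr}=k_3$, $\Gamma^r_{tt}=k_4$, $\Gamma^r_{rr}=k_5$,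 $\Gamma^r_{tr}=k_6$, $\Gamma^t_{\theta\theta}=k_7$, $\Gamma^t_{\phi\phi}=k_7\sin^2\theta$, $\Gamma^\theta_{\theta t}=\Gamma^\phi_{\phi t}=k_8$, $\Gamma^\theta_{\theta r}=\Gamma^\phi_{\phi r}=k_9$, $\Gamma^r_{\theta\theta}=k_{10}$, $\Gamma^r_{\phi\phi}=k_{10}\sin^2\theta$, $\Gamma^\phi_{t\theta}=k_{11}/\sin\theta$, $\Gamma^\theta_{\phi t}=-k_{11}\sin\theta$, $\Gamma^\phi_{r\theta}=k_{12}/\sin\theta$, $\Gamma^\theta_{r\phi}=-k_{12}\sin\theta$, $\Gamma^\phi_{\theta\phi}=\cot\theta$, $\Gamma^\theta_{\phi\phi}=-\sin\theta\cos\theta$, where $k_i=k_i(t,r)$. *)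

From HB Require Import structures.
From mathcomp Require Import all_boot all_order all_algebra.
From mathcomp Require Import all_classical all_reals all_analysis.
Set Implicit Arguments. Unset Strict Implicit. Unset Printing Implicit Defensive.
Import Order.TTheory GRing.Theory Num.Theory.
Import numFieldNormedType.Exports.
Local Open Scope classical_set_scope.
Local Open Scope ring_scope.

Section Defs.
Variable R : realType.

(* Points of TM (restricted to the chart) are rows
   (t, r, theta, phi, tdot, rdot, thetadot, phidot) : 'rV[R]_8. *)
Definition co (p : 'rV[R]_8) (k : nat) : R := p ord0 (inord k).
Definition base (p : 'rV[R]_8) : 'rV[R]_4 := \row_(i < 4) p ord0 (inord i).
Definition vel (p : 'rV[R]_8) : 'rV[R]_4 := \row_(i < 4) p ord0 (inord (4 + i)).
Definition scalev (lam : R) (p : 'rV[R]_8) : 'rV[R]_8 :=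
  \row_(i < 8) (if (i < 4)%N then p ord0 i else lam * p ord0 i).

Definition wco (p : 'rV[R]_8) : R :=
  Num.sqrt (co p 6 ^+ 2 + sin (co p 2) ^+ 2 * co p 7 ^+ 2).

Definition ev (i : nat) : 'rV[R]_8 := delta_mx ord0 (inord i).
Definition partial (i : nat) (f : 'rV[R]_8 -> R) : 'rV[R]_8 -> R :=
  fun x => 'D_(ev i) f x.

Fixpoint Ck (n : nat) (A : set 'rV[R]_8) (f : 'rV[R]_8 -> R) : Prop :=
  (forall x, A x -> {for x, continuous f}) /\
  match n with
  | 0%N => True
  | n'.+1 => forall i : 'I_8,
      (forall x, A x -> derivable f x (ev i)) /\ Ck n' A (partial i f)
  end.
Definition smooth_on (A : set 'rV[R]_8) (f : 'rV[R]_8 -> R) : Prop :=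
  forall n, Ck n A f.

Definition chart_domain (M : set 'rV[R]_4) : Prop :=
  open M /\ forall x, M x -> sin (x ord0 (inord 2)) != 0.

Definition conic_subbundle (M : set 'rV[R]_4) (A : set 'rV[R]_8) : Prop :=
  [/\ open A,
      (forall p, A p -> M (base p) /\ vel p != 0),
      (forall x, M x -> exists p, A p /\ base p = x)
    & (forall p lam, A p -> 0 < lam -> A (scalev lam p))].

Definition gmat (L : 'rV[R]_8 -> R) (p : 'rV[R]_8) : 'M[R]_4 :=
  \matrix_(a < 4, b < 4) (2^-1 * partial (4 + a) (partial (4 + b) L) p).

Definition pseudo_finsler (A : set 'rV[R]_8) (L : 'rV[R]_8 -> R) : Prop :=
  [/\ smooth_on A L,
      (forall p lam, A p -> 0 < lam -> L (scalev lam p) = lam ^+ 2 * L p)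
    & (forall p, A p -> \det (gmat L p) != 0)].

Definition so3_symmetric (A : set 'rV[R]_8) (L : 'rV[R]_8 -> R) : Prop :=
  exists l : R -> R -> R -> R -> R -> R,
    forall p, A p -> L p = l (co p 0) (co p 1) (co p 4) (co p 5) (wco p).

(* Connection coefficients Gamma^c_{ab}, indices 0..3 = t, r, theta, phi;
   k i = k_i (i = 1..12), functions of (t, r). Gam0 for a <= b. *)
Definition Gam0 (k : nat -> R -> R -> R) (c a b : nat) (t r th : R) : R :=
  match c, a, b with
  | 0%N, 0%N, 0%N => k 1%N t r
  | 0%N, 0%N, 1%N => k 2%N t r
  | 0%N, 1%N, 1%N => k 3%N t r
  | 1%N, 0%N, 0%N => k 4%N t r
  | 1%N, 1%N, 1%N => k 5%N t r
  | 1%N, 0%N, 1%N => k 6%N t r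
  | 0%N, 2%N, 2%N => k 7%N t r
  | 0%N, 3%N, 3%N => k 7%N t r * sin th ^+ 2
  | 2%N, 0%N, 2%N => k 8%N t r
  | 3%N, 0%N, 3%N => k 8%N t r
  | 2%N, 1%N, 2%N => k 9%N t r
  | 3%N, 1%N, 3%N => k 9%N t r
  | 1%N, 2%N, 2%N => k 10%N t r
  | 1%N, 3%N, 3%N => k 10%N t r * sin th ^+ 2
  | 3%N, 0%N, 2%N => k 11%N t r / sin th
  | 2%N, 0%N, 3%N => - (k 11%N t r * sin th)
  | 3%N, 1%N, 2%N => k 12%N t r / sin th
  | 2%N, 1%N, 3%N => - (k 12%N t r * sin th)
  | 3%N, 2%N, 3%N => cos th / sin th
  | 2%N, 3%N, 3%N => - (sin th * cos th)
  | _, _, _ => 0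
  end.
Definition Gam (k : nat -> R -> R -> R) (c a b : nat) (t r th : R) : R :=
  if (a <= b)%N then Gam0 k c a b t r th else Gam0 k c b a t r th.

Definition deltaL (k : nat -> R -> R -> R) (a : nat) (L : 'rV[R]_8 -> R)
  (p : 'rV[R]_8) : R :=
  partial a L p -
  \sum_(b < 4) \sum_(c < 4)
     Gam k c a b (co p 0) (co p 1) (co p 2) * co p (4 + b) * partial (4 + c) L p.

(* partial_w L, defined by w partial_w = thetadot dot-partial_theta + phidot dot-partial_phi
   (meaningful where w <> 0) *)
Definition partial_w (L : 'rV[R]_8 -> R) (p : 'rV[R]_8) : R :=
  (co p 6 * partial 6 L p + co p 7 * partial 7 L p) / wco p.

Definition delta_w (k : nat -> R -> R -> R) (L : 'rV[R]_8 -> R) (p : 'rV[R]_8) : R :=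
  let t := co p 0 in let r := co p 1 in
  wco p * k 7%N t r * partial 4 L p + wco p * k 10%N t r * partial 5 L p
  + (k 8%N t r * co p 4 + k 9%N t r * co p 5) * partial_w L p.

End Defs.

From HB Require Import structures.
From mathcomp Require Import all_boot all_order all_algebra.
From mathcomp Require Import all_classical all_reals all_analysis.
From mathcomp Require Import ring.
Set Implicit Arguments. Unset Strict Implicit. Unset Printing Implicit Defensive.
Import Order.TTheory GRing.Theory Num.Theory.
Import numFieldNormedType.Exports.
Local Open Scope classical_set_scope.
Local Open Scope ring_scope.

(* Since L depends on theta, phi, thetadot, phidot only through w, its derivatives in
   these directions are all governed by one quantity, partial_w L:
     partial_phi L = 0,   partial_theta L = cot theta phidot partial_phidot L,
     (partial_thetadot L, partial_phidot L) =
       (thetadot, sin^2 theta phidot) partial_w L / w.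
   Only directional derivatives of L are available, so each identity comes from moving
   one angular coordinate and compensating with another so that w stays fixed, and
   applying the one-variable chain rule.  Substituting into delta_theta L and
   delta_phi L gives, with K = k11 tdot + k12 rdot (= twist k),
     w delta_theta L = - (thetadot delta_w L + sin theta phidot K partial_w L),
     w delta_phi L = - sin theta (sin theta phidot delta_w L - thetadot K partial_w L),
   an invertible linear image of (delta_w L, K partial_w L) when w <> 0.  Hence
   delta_theta L = delta_phi L = 0 iff delta_w L = 0 and K partial_w L = 0.  If K were
   nonzero at a point with thetadot <> 0, then partial_w L, hence partial_thetadot L,
   would vanish on a neighbourhood, and the thetadot column of g would be zero,
   contradicting non-degeneracy.  So K = 0, and since tdot, rdot vary in an open set,
   k11 = k12 = 0. *)

Section Lines.
Variables (R : realType) (V : normedModType R).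

Lemma derive_line (W : normedModType R) (f : V -> W) q v :
  'D_v f q = 'D_1 (fun h : R => f (h *: v + q)) 0.
Proof.
rewrite /derive; do 2 f_equal; apply/funext => h /=.
by rewrite addr0 scale0r add0r [_ *: 1]mulr1.
Qed.

Lemma near0_line_in (A : set V) q v : open A -> A q ->
  \forall h \near 0, A (h *: v + q).
Proof.
move=> oA Aq.
have : (fun h : R => h *: v + q) @ 0 --> 0 *: v + q.
  by apply: cvgD; [apply: cvgZr_tmp; exact: cvg_id | exact: cvg_cst].
rewrite scale0r add0r; apply; exact: open_nbhs_nbhs.
Qed.

End Lines.

Lemma derivable1_cvg (R : realType) (f : R -> R) x : derivable f x 1 -> f @ x --> f x.
Proof. by move/derivable1_diffP/differentiable_continuous. Qed.

Lemma near0_affine_neq0 (R : realType) (c d : R) : c != 0 ->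
  \forall h \near 0, h * d + c != 0.
Proof.
move=> c0; have : (fun h : R => h * d + c) @ 0 --> 0 * d + c.
  by apply: cvgD; [apply: cvgMr_tmp; exact: cvg_id | exact: cvg_cst].
by rewrite mul0r add0r => /cvgr_neq0; apply.
Qed.

Lemma near0_exists_neq0 (R : realType) (P : R -> Prop) :
  (\forall h \near 0, P h) -> exists2 h, h != 0 & P h.
Proof.
move=> P0; have : \forall h \near 0^', h != 0 /\ P h.
  near=> h; split; near: h; [exact: nbhs_dnbhs_neq | exact: nbhs_dnbhs].
by case/filter_ex => h [] ? ?; exists h.
Unshelve. all: by end_near.
Qed.

Lemma orthogonal_system_eq0 (R : fieldType) (a b X Y : R) : a ^+ 2 + b ^+ 2 != 0 ->
  a * X + b * Y = 0 -> b * X - a * Y = 0 -> X = 0 /\ Y = 0.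
Proof.
move=> ab0 e1 e2.
have eX : (a ^+ 2 + b ^+ 2) * X = a * (a * X + b * Y) + b * (b * X - a * Y) by ring.
have eY : (a ^+ 2 + b ^+ 2) * Y = b * (a * X + b * Y) - a * (b * X - a * Y) by ring.
rewrite e1 e2 !mulr0 ?subr0 ?addr0 in eX eY.
by split; apply: (mulfI ab0); rewrite mulr0.
Qed.

Lemma proportional_pairE (R : fieldType) (t f s D6 D7 w : R) : w != 0 ->
  w ^+ 2 = t ^+ 2 + s ^+ 2 * f ^+ 2 -> s ^+ 2 * f * D6 = t * D7 ->
  D6 = t * ((t * D6 + f * D7) / w) / w /\
  D7 = s ^+ 2 * f * ((t * D6 + f * D7) / w) / w.
Proof.
move=> w0 ew eD; split.
  have -> : t * ((t * D6 + f * D7) / w) / w = (t ^+ 2 * D6 + f * (t * D7)) / w ^+ 2.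
    by field.
  rewrite -eD ew; have -> : t ^+ 2 * D6 + f * (s ^+ 2 * f * D6) =
    D6 * (t ^+ 2 + s ^+ 2 * f ^+ 2) by ring.
  by rewrite -ew mulfK ?expf_neq0.
have -> : s ^+ 2 * f * ((t * D6 + f * D7) / w) / w =
  (t * (s ^+ 2 * f * D6) + s ^+ 2 * f ^+ 2 * D7) / w ^+ 2 by field.
rewrite eD; have -> : t * (t * D7) + s ^+ 2 * f ^+ 2 * D7 =
  D7 * (t ^+ 2 + s ^+ 2 * f ^+ 2) by ring.
by rewrite -ew mulfK ?expf_neq0.
Qed.

Section Coordinates.
Variable R : realType.
Implicit Types (p : 'rV[R]_8) (h : R).

Lemma co_shift p h i j : (i < 8)%N -> (j < 8)%N ->
  co (h *: ev R i + p) j = h * (i == j)%:R + co p j.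
Proof.
move=> ilt jlt; rewrite /co /ev !mxE eqxx /=.
have -> : (inord j == inord i :> 'I_8) = (j == i) by rewrite -val_eqE /= !inordK.
by rewrite eq_sym.
Qed.

Lemma base_co p i : (i < 4)%N -> base p ord0 (inord i) = co p i.
Proof. by move=> ilt; rewrite /base mxE inordK. Qed.

Lemma wco_shift p h i : (i < 8)%N -> wco (h *: ev R i + p) =
  Num.sqrt ((h * (i == 6)%:R + co p 6) ^+ 2 +
    sin (h * (i == 2)%:R + co p 2) ^+ 2 * (h * (i == 7)%:R + co p 7) ^+ 2).
Proof. by move=> ilt; rewrite /wco !co_shift. Qed.

Lemma wco_sqr p : wco p ^+ 2 = co p 6 ^+ 2 + sin (co p 2) ^+ 2 * co p 7 ^+ 2.
Proof. by rewrite /wco sqr_sqrtr // addr_ge0 ?sqr_ge0 // mulr_ge0 ?sqr_ge0. Qed.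

Lemma wco_eq0 p : sin (co p 2) != 0 ->
  (wco p == 0) = (co p 6 == 0) && (co p 7 == 0).
Proof.
move=> s0; have t2_ge0 : 0 <= co p 6 ^+ 2 := sqr_ge0 _.
have sf2_ge0 : 0 <= sin (co p 2) ^+ 2 * co p 7 ^+ 2 by rewrite mulr_ge0 ?sqr_ge0.
rewrite -sqrf_eq0 wco_sqr (paddr_eq0 t2_ge0 sf2_ge0) sqrf_eq0 mulf_eq0.
by rewrite !sqrf_eq0 (negbTE s0).
Qed.

Definition twist (k : nat -> R -> R -> R) p : R :=
  k 11%N (co p 0) (co p 1) * co p 4 + k 12%N (co p 0) (co p 1) * co p 5.

Section DeltaExpansion.
Variables (k : nat -> R -> R -> R) (F : 'rV[R]_8 -> R) (p : 'rV[R]_8).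
Let k_ i := k i (co p 0) (co p 1).

Lemma deltaL_thetaE : deltaL k 2 F p = partial 2 F p -
  (co p 4 * (k_ 8%N * partial 6 F p + k_ 11%N / sin (co p 2) * partial 7 F p)
 + co p 5 * (k_ 9%N * partial 6 F p + k_ 12%N / sin (co p 2) * partial 7 F p)
 + co p 6 * (k_ 7%N * partial 4 F p + k_ 10%N * partial 5 F p)
 + co p 7 * (cos (co p 2) / sin (co p 2) * partial 7 F p)).
Proof.
rewrite /deltaL !big_ord_recr big_ord0 /= /Gam /= !big_ord0 /k_.
rewrite -[(4 + 0)%N]/4%N -[(4 + 1)%N]/5%N -[(4 + 2)%N]/6%N -[(4 + 3)%N]/7%N.
move: (k 7%N _ _) (k 8%N _ _) (k 9%N _ _) (k 10%N _ _) (k 11%N _ _) (k 12%N _ _).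
move: (partial 2 F p) (partial 4 F p) (partial 5 F p) (partial 6 F p) (partial 7 F p).
by move: (co p 4) (co p 5) (co p 6) (co p 7) (sin _) (cos _) => *; ring.
Qed.

Lemma deltaL_phiE : deltaL k 3 F p = partial 3 F p -
  (co p 4 * (- (k_ 11%N * sin (co p 2)) * partial 6 F p + k_ 8%N * partial 7 F p)
 + co p 5 * (- (k_ 12%N * sin (co p 2)) * partial 6 F p + k_ 9%N * partial 7 F p)
 + co p 6 * (cos (co p 2) / sin (co p 2) * partial 7 F p)
 + co p 7 * (k_ 7%N * sin (co p 2) ^+ 2 * partial 4 F p
     + k_ 10%N * sin (co p 2) ^+ 2 * partial 5 F p
     - sin (co p 2) * cos (co p 2) * partial 6 F p)).
Proof.
rewrite /deltaL !big_ord_recr big_ord0 /= /Gam /= !big_ord0 /k_.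
rewrite -[(4 + 0)%N]/4%N -[(4 + 1)%N]/5%N -[(4 + 2)%N]/6%N -[(4 + 3)%N]/7%N.
move: (k 7%N _ _) (k 8%N _ _) (k 9%N _ _) (k 10%N _ _) (k 11%N _ _) (k 12%N _ _).
move: (partial 3 F p) (partial 4 F p) (partial 5 F p) (partial 6 F p) (partial 7 F p).
by move: (co p 4) (co p 5) (co p 6) (co p 7) (sin _) (cos _) => *; ring.
Qed.

End DeltaExpansion.

Lemma twist_shift k p h j : j \in [:: 4; 5; 6; 7]%N ->
  twist k (h *: ev R j + p) = h * (k 11%N (co p 0) (co p 1) * (j == 4)%:R
    + k 12%N (co p 0) (co p 1) * (j == 5)%:R) + twist k p.
Proof.
move=> j47; have j8 : (j < 8)%N by move: j47; rewrite !inE => /or4P[]/eqP->.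
have [c0 c1] : co (h *: ev R j + p) 0 = co p 0 /\ co (h *: ev R j + p) 1 = co p 1.
  by rewrite !co_shift //; move: j47; rewrite !inE => /or4P[]/eqP-> /=;
    rewrite !mulr0 !add0r.
rewrite /twist c0 c1 !co_shift //.
by move: (k 11%N _ _) (k 12%N _ _) => a b; ring.
Qed.

End Coordinates.

Lemma is_derive0_sqrt_quadratic (R : realType) (a c u : R) :
  is_derive (0 : R) (1 : R) (fun h : R => a * (Num.sqrt (1 + (2 * u * h + h ^+ 2) * c) - 1))
    (a * (u * c)).
Proof.
have dq : is_derive (0 : R) (1 : R) (fun h : R => 1 + (2 * u * h + h ^+ 2) * c) (2 * u * c).
  by apply: is_derive_eq; rewrite /GRing.scale /=; ring.
have dsqrt : is_derive ((fun h : R => 1 + (2 * u * h + h ^+ 2) * c) 0) 1 Num.sqrt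
    (2 * Num.sqrt 1)^-1.
  rewrite /= mulr0 expr0n /= add0r mul0r addr0.
  by apply: is_derive1_sqrt; exact: ltr01.
have dsq := @is_derive1_comp _ Num.sqrt (fun h : R => 1 + (2 * u * h + h ^+ 2) * c) 0 _ _
  dsqrt dq.
by apply: is_derive_eq; rewrite /GRing.scale /= sqrtr1; field.
Qed.

Lemma open_thetadot_neq0 (R : realType) (A : set 'rV[R]_8) p : open A -> A p ->
  exists q, [/\ A q, co q 6 != 0, co q 0 = co p 0 & co q 1 = co p 1].
Proof.
move=> oA Ap; have [t0|t0] := eqVneq (co p 6) 0; last by exists p.
have [h h0 Ah] := near0_exists_neq0 (near0_line_in (ev R 6) oA Ap).
by exists (h *: ev R 6 + p); rewrite !co_shift //= t0 !mulr0 !add0r mulr1 addr0.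
Qed.

Section Symmetry.
Variables (R : realType) (A : set 'rV[R]_8) (L : 'rV[R]_8 -> R).
Variable l : R -> R -> R -> R -> R -> R.
Hypothesis A_open : open A.
Hypothesis L_sym : forall p, A p -> L p = l (co p 0) (co p 1) (co p 4) (co p 5) (wco p).
Hypothesis L_derivable : forall p i, (i < 8)%N -> A p -> derivable L p (ev R i).
Hypothesis A_sin : forall p, A p -> sin (co p 2) != 0.
Implicit Types (p : 'rV[R]_8) (h : R).

Definition angular_coords : seq nat := [:: 2; 3; 6; 7]%N.

Lemma angular_coords_lt8 i : i \in angular_coords -> (i < 8)%N.
Proof. by rewrite !inE => /or4P[]/eqP->. Qed.

Lemma L_shift_angular p i j h1 h2 : i \in angular_coords -> j \in angular_coords ->
  A (h1 *: ev R i + p) -> A (h2 *: ev R j + p) ->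
  wco (h1 *: ev R i + p) = wco (h2 *: ev R j + p) ->
  L (h1 *: ev R i + p) = L (h2 *: ev R j + p).
Proof.
move=> ia ja Ai Aj ew; rewrite !L_sym // ew.
have co_fixed a h m : a \in angular_coords -> m \in [:: 0; 1; 4; 5]%N ->
    co (h *: ev R a + p) m = co p m.
  by rewrite !inE => /or4P[]/eqP-> /or4P[]/eqP->; rewrite co_shift //= mulr0 add0r.
by rewrite !co_fixed.
Qed.

Lemma partialL_reparam p i j (m : R -> R) (dm : R) : A p ->
  i \in angular_coords -> j \in angular_coords ->
  is_derive (0 : R) (1 : R) m dm -> m 0 = 0 ->
  (\forall h \near 0, wco (h *: ev R i + p) = wco (m h *: ev R j + p)) ->
  partial i L p = partial j L p * dm.
Proof.
move=> Ap ia ja dm_m m0 ew; rewrite /partial !(@derive_line _ _ _ L).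
pose g h := L (h *: ev R j + p).
have dg : is_derive (m 0) 1 g ('D_1 g 0).
  rewrite m0; apply: derivableP; apply: (derivable1P L p (ev R j)).1.
  by apply: L_derivable => //; exact: angular_coords_lt8.
have m_cvg : m @ 0 --> 0.
  by rewrite -[X in _ --> X]m0; apply: derivable1_cvg; case: dm_m.
have Aj := m_cvg _ (near0_line_in (ev R j) A_open Ap).
have Ai := near0_line_in (ev R i) A_open Ap.
suff -> : 'D_1 (fun h => L (h *: ev R i + p)) 0 = 'D_1 (g \o m) 0.
  by have := is_derive1_comp dg dm_m; rewrite derive_val.
apply: near_eq_derive; near=> h; apply: L_shift_angular => //; by near: h.
Unshelve. all: by end_near.
Qed.

Lemma partialL_vel_eq0 p i : A p -> i \in [:: 6; 7]%N -> co p i = 0 ->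
  partial i L p = 0.
Proof.
move=> Ap i67 pi0.
have ia : i \in angular_coords by move: i67; rewrite !inE => /orP[]/eqP->.
have ew : \forall h \near 0, wco (h *: ev R i + p) = wco (- h *: ev R i + p).
  near=> h; rewrite !wco_shift ?angular_coords_lt8 //.
  by move: i67 pi0; rewrite !inE => /orP[]/eqP-> pi0 /=;
    rewrite pi0 !mulr1 !mulr0 !addr0 !add0r sqrrN.
have := partialL_reparam Ap ia ia (is_deriveNid _ _) (oppr0 _) ew.
by rewrite mulrN1 => /eqP; rewrite -addr_eq0 -mulr2n mulrn_eq0 /= => /eqP.
Unshelve. all: by end_near.
Qed.

Lemma partialL_phi_eq0 p : A p -> partial 3 L p = 0.
Proof.
move=> Ap; have ew : \forall h \near 0, wco (h *: ev R 3 + p) = wco (cst 0 h *: ev R 3 + p).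
  by near=> h; rewrite !wco_shift //= !mulr0 !add0r.
by rewrite (partialL_reparam Ap _ _ (is_derive_cst _ _ _) _ ew) ?mulr0.
Unshelve. all: by end_near.
Qed.

Lemma partialL_theta p : A p ->
  partial 2 L p = partial 7 L p * (co p 7 * (cos (co p 2) / sin (co p 2))).
Proof.
move=> Ap; have s0 := A_sin Ap; set th := co p 2; set f := co p 7.
have dm : is_derive (0 : R) (1 : R) (fun h : R => f * (sin (h + th) / sin th - 1))
    (f * (cos th / sin th)).
  by apply: is_derive_eq; rewrite /GRing.scale /= add0r; ring.
apply: (partialL_reparam Ap _ _ dm); rewrite ?add0r ?mulfV ?subrr ?mulr0 //.
near=> h; rewrite !wco_shift //= !mulr1 !mulr0 !add0r -/th -/f.
by congr (Num.sqrt (_ + _)); field.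
Unshelve. all: by end_near.
Qed.

Lemma partialL_thetadot_phidot p : A p ->
  sin (co p 2) ^+ 2 * co p 7 * partial 6 L p = co p 6 * partial 7 L p.
Proof.
move=> Ap; have s0 := A_sin Ap.
have [f0|f0] := eqVneq (co p 7) 0.
  by rewrite (partialL_vel_eq0 Ap _ f0) ?inE // f0 !mulr0 mul0r.
set th := co p 2; set f := co p 7; set t := co p 6.
set c := (sin th ^+ 2 * f ^+ 2)^-1.
(* moving [t] by [h] is compensated by scaling [f] by [sqrt (1 + (2 t h + h^2) c)] *)
suff -> : partial 6 L p = partial 7 L p * (f * (t * c)).
  by rewrite /c; field; apply/andP.
apply: (partialL_reparam Ap _ _ (is_derive0_sqrt_quadratic f c t)) => //.
  by rewrite mulr0 expr0n /= add0r mul0r addr0 sqrtr1 subrr mulr0.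
have rad_cvg : (fun h : R => 1 + (2 * t * h + h ^+ 2) * c) @ (0 : R) --> (1 : R).
  have := @derivable1_cvg _ (fun h : R => 1 + (2 * t * h + h ^+ 2) * c) 0.
  rewrite /= mulr0 expr0n /= add0r mul0r addr0; apply; exact: ex_derive.
have rad_ge0 : \forall h \near 0, 0 <= 1 + (2 * t * h + h ^+ 2) * c.
  by near=> h; apply: ltW; near: h; exact: cvgr_gt (1 : R) rad_cvg 0 ltr01.
near=> h; rewrite !wco_shift //= !mulr1 !mulr0 !add0r; congr (Num.sqrt _).
rewrite -/th -/f -/t mulrBr mulr1 addrNK exprMn sqr_sqrtr; last by near: h.
by rewrite /c; field; apply/andP.
Unshelve. all: by end_near.
Qed.

Lemma partialL_angvelE p : A p -> wco p != 0 ->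
  partial 6 L p = co p 6 * partial_w L p / wco p /\
  partial 7 L p = sin (co p 2) ^+ 2 * co p 7 * partial_w L p / wco p.
Proof.
move=> Ap w0; rewrite /partial_w.
exact: proportional_pairE w0 (wco_sqr p) (partialL_thetadot_phidot Ap).
Qed.

Variable k : nat -> R -> R -> R.

Lemma deltaL_angles_decomp p : A p -> wco p != 0 ->
  wco p * deltaL k 2 L p =
    - (co p 6 * delta_w k L p + sin (co p 2) * co p 7 * (twist k p * partial_w L p)) /\
  wco p * deltaL k 3 L p = - sin (co p 2) *
    (sin (co p 2) * co p 7 * delta_w k L p - co p 6 * (twist k p * partial_w L p)).
Proof.
move=> Ap w0; have s0 := A_sin Ap; have [E6 E7] := partialL_angvelE Ap w0.
rewrite deltaL_thetaE deltaL_phiE partialL_theta // partialL_phi_eq0 // E6 E7.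
rewrite /twist /delta_w /=.
move: (k 7%N _ _) (k 8%N _ _) (k 9%N _ _) (k 10%N _ _) (k 11%N _ _) (k 12%N _ _).
move: (partial 4 L p) (partial 5 L p) (partial_w L p) => *.
move: s0; move: (co p 4) (co p 5) (co p 6) (co p 7) (sin _) (cos _) => ? ? ? ? ? ? s0.
by split; field; rewrite w0 s0.
Qed.

Lemma deltaL_angles_wco0 p : A p -> wco p = 0 ->
  deltaL k 2 L p = 0 /\ deltaL k 3 L p = 0.
Proof.
move=> Ap /eqP; rewrite wco_eq0 ?A_sin // => /andP[/eqP t0 /eqP f0].
have D6 : partial 6 L p = 0 by apply: partialL_vel_eq0; rewrite ?inE.
have D7 : partial 7 L p = 0 by apply: partialL_vel_eq0; rewrite ?inE.
rewrite deltaL_thetaE deltaL_phiE partialL_theta // partialL_phi_eq0 // D6 D7 t0 f0.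
by split; rewrite !(mul0r, mulr0, addr0, subr0).
Qed.

Lemma deltaL_angles_eq0_delta_w p : A p -> wco p != 0 ->
  deltaL k 2 L p = 0 -> deltaL k 3 L p = 0 ->
  delta_w k L p = 0 /\ twist k p * partial_w L p = 0.
Proof.
move=> Ap w0 d2 d3; have [e2 e3] := deltaL_angles_decomp Ap w0.
rewrite d2 d3 mulr0 in e2 e3.
apply: (orthogonal_system_eq0 (a := co p 6) (b := sin (co p 2) * co p 7)).
- by rewrite exprMn -wco_sqr expf_neq0.
- by apply/eqP; rewrite -oppr_eq0 -e2.
- by move/esym/eqP: e3; rewrite mulf_eq0 oppr_eq0 (negbTE (A_sin Ap)) => /eqP.
Qed.

Lemma delta_w_eq0_deltaL_angles p : A p -> twist k p = 0 ->
  (wco p != 0 -> delta_w k L p = 0) -> deltaL k 2 L p = 0 /\ deltaL k 3 L p = 0.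
Proof.
move=> Ap tw0 dw0; have [w0|w0] := eqVneq (wco p) 0; first exact: deltaL_angles_wco0.
have [e2 e3] := deltaL_angles_decomp Ap w0.
rewrite dw0 // tw0 !(mul0r, mulr0, add0r, subr0, oppr0) in e2 e3.
by split; apply: (mulfI w0); rewrite mulr0.
Qed.

Section Nondegenerate.
Hypothesis deltaL_angles_eq0 : forall p, A p -> deltaL k 2 L p = 0 /\ deltaL k 3 L p = 0.
Hypothesis L_nondegenerate : forall p, A p -> \det (gmat L p) != 0.

Lemma partialL_thetadot_near_eq0 q j : A q -> co q 6 != 0 -> twist k q != 0 ->
  j \in [:: 4; 5; 6; 7]%N -> \forall h \near 0, partial 6 L (h *: ev R j + q) = 0.
Proof.
move=> Aq t0 tw0 j47; have j8 : (j < 8)%N by move: j47; rewrite !inE => /or4P[]/eqP->.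
have A_near := near0_line_in (ev R j) A_open Aq.
have t0_near := near0_affine_neq0 ((j == 6)%:R) t0.
have tw0_near := near0_affine_neq0 (k 11%N (co q 0) (co q 1) * (j == 4)%:R
  + k 12%N (co q 0) (co q 1) * (j == 5)%:R) tw0.
near=> h; set q' := h *: ev R j + q.
have Aq' : A q' by rewrite /q'; near: h.
have w0 : wco q' != 0.
  by rewrite wco_eq0 ?A_sin // negb_and /q' co_shift //; apply/orP; left; near: h.
have tw0' : twist k q' != 0 by rewrite /q' twist_shift //; near: h.
have [d2 d3] := deltaL_angles_eq0 Aq'.
have [_ /eqP] := deltaL_angles_eq0_delta_w Aq' w0 d2 d3.
rewrite mulf_eq0 (negbTE tw0') /= => /eqP dw0.
by have [-> _] := partialL_angvelE Aq' w0; rewrite dw0 mulr0 mul0r.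
Unshelve. all: by end_near.
Qed.

Lemma twist_eq0 q : A q -> co q 6 != 0 -> twist k q = 0.
Proof.
move=> Aq t0; apply/eqP; apply: contraT => tw0.
have := L_nondegenerate Aq.
rewrite (expand_det_col _ (inord 2)) big1 ?eqxx // => i _.
rewrite mxE inordK // -[(4 + 2)%N]/6%N.
suff -> : partial (4 + i) (partial 6 L) q = 0 by rewrite mulr0 mul0r.
rewrite {1}/partial (@derive_line _ _ _ (partial 6 L)).
rewrite (near_eq_derive _ (g := cst 0)) ?derive_cst //.
by apply: partialL_thetadot_near_eq0; case: i => [[|[|[|[|]]]]].
Qed.

Lemma k11_k12_eq0 p : A p ->
  k 11%N (co p 0) (co p 1) = 0 /\ k 12%N (co p 0) (co p 1) = 0.
Proof.
move=> Ap; have [q [Aq t0 <- <-]] := open_thetadot_neq0 A_open Ap.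
have [h h0 [A4 A5]] : exists2 h : R, h != 0 & A (h *: ev R 4 + q) /\ A (h *: ev R 5 + q).
  by apply: near0_exists_neq0; near=> h; split; near: h; exact: near0_line_in.
have shift_twist_eq0 j : j \in [:: 4; 5]%N -> A (h *: ev R j + q) ->
    k 11%N (co q 0) (co q 1) * (j == 4)%:R + k 12%N (co q 0) (co q 1) * (j == 5)%:R = 0.
  move=> /[!inE] /orP[]/eqP-> Aj; have := twist_eq0 Aj;
    rewrite co_shift //= mulr0 add0r twist_shift // (twist_eq0 Aq t0) addr0;
    by move=> /(_ t0)/eqP; rewrite mulf_eq0 (negbTE h0) => /eqP.
have := shift_twist_eq0 4%N isT A4; have := shift_twist_eq0 5%N isT A5.
by rewrite /= !mulr1 !mulr0 addr0 add0r => -> ->.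
Unshelve. all: by end_near.
Qed.

End Nondegenerate.

End Symmetry.

Theorem lemma1 (R : realType) (M : set 'rV[R]_4) (A : set 'rV[R]_8)
  (k : nat -> R -> R -> R) (L : 'rV[R]_8 -> R) :
  chart_domain M -> conic_subbundle M A -> pseudo_finsler A L ->
  so3_symmetric A L ->
  ((forall p, A p -> deltaL k 2 L p = 0 /\ deltaL k 3 L p = 0) <->
   ((forall p, A p -> wco p != 0 -> delta_w k L p = 0) /\
    (forall x, M x -> k 11%N (x ord0 (inord 0)) (x ord0 (inord 1)) = 0 /\
                      k 12%N (x ord0 (inord 0)) (x ord0 (inord 1)) = 0))).
Proof.
move=> [_ M_sin] [A_open A_base A_fiber _] [L_smooth _ L_nondeg] [l L_sym].
have L_derivable p i : (i < 8)%N -> A p -> derivable L p (ev R i).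
  by move=> ilt Ap; exact: ((L_smooth 1%N).2 (Ordinal ilt)).1 p Ap.
have A_sin p : A p -> sin (co p 2) != 0.
  by move=> Ap; rewrite -base_co //; exact: M_sin (A_base p Ap).1.
split=> [dL0 | [dw0 k0] p Ap].
  split=> [p Ap w0 | x Mx].
    have [d2 d3] := dL0 p Ap.
    by case: (deltaL_angles_eq0_delta_w A_open L_sym L_derivable A_sin Ap w0 d2 d3).
  have [p [Ap <-]] := A_fiber x Mx; rewrite !base_co //.
  exact: (k11_k12_eq0 A_open L_sym L_derivable A_sin dL0 L_nondeg Ap).
apply: (delta_w_eq0_deltaL_angles A_open L_sym L_derivable A_sin Ap _ (dw0 p Ap)).
have [k11 k12] := k0 _ (A_base p Ap).1; rewrite !base_co // in k11 k12.
by rewrite /twist k11 k12 !mul0r addr0.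
Qed.
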